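(* Let $x_0\in\mathbb{R}^2$, $r_0>0$ and $0<\varepsilon_0<1/100$, and let $K$ be a relatively closed subset of $B(x_0,r_0)$ containing $x_0$. Assume that $\beta^{\rm bil}_K(x,r)\le\varepsilon_0$ for all $x\in K\cap B(x_0,r_0/2)$ and all $0<r\le r_0/2$. Then $K$ separates $B(x_0,r_0/10)$.
   Context: $B(x,r)$ is the open ball. For a set $F$ and $x\in F$: flatness $\beta_F(x,r)=r^{-1}\inf_\ell\sup_{y\in F\cap B(x,r)}\mathrm{dist}(y,\ell)$ and bilateral flatness $\beta^{\rm bil}_F(x,r)=r^{-1}\inf_\ell\max\{\sup_{y\in F\cap B(x,r)}\mathrm{dist}(y,\ell),\sup_{y\in\ell\cap B(x,r)}\mathrm{dist}(y,F)\}$, infima over lines $\ell$ through $x$. With $\nu(x,r)$ a unit normal of a line attaining the infimum in $\beta_F(x,r)$ and $D^\pm_t(x,r)=\{z\in B(x,r):\pm(z-x)\cdot\nu(x,r)>t\}$, $F$ separates $B(x,r)$ if $\beta:=\beta_F(x,r)\le1/2$ and $D^+_{\beta r}(x,r)$, $D^-_{\beta r}(x,r)$ lie in distinct connected components of $B(x,r)\setminus F$. *)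

(* The plane R^2 is modelled as R * R (R : realType)
   with the product topology (= Euclidean topology) and the Euclidean metric. *)
From HB Require Import structures.
From mathcomp Require Import all_boot all_order all_algebra.
From mathcomp Require Import all_classical all_reals all_analysis.
Set Implicit Arguments. Unset Strict Implicit. Unset Printing Implicit Defensive.
Import Order.TTheory GRing.Theory Num.Theory.
Import numFieldNormedType.Exports.
Local Open Scope classical_set_scope.
Local Open Scope ring_scope.

Section Flatness.
Variable R : realType.
Implicit Types (x y z v : R * R) (F : set (R * R)) (r t : R).

Definition edist x y : R := Num.sqrt ((x.1 - y.1) ^+ 2 + (x.2 - y.2) ^+ 2).
Definition eball x r : set (R * R) := [set y | edist y x < r].

Definition unitv v : Prop := v.1 ^+ 2 + v.2 ^+ 2 = 1.

(* signed / unsigned distance from y to the line through x with unit normal v *)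
Definition sdot x v y : R := (y.1 - x.1) * v.1 + (y.2 - x.2) * v.2.
Definition ldist x v y : R := `| sdot x v y |.

Definition flat_width F x r v : R := sup [set ldist x v y | y in F `&` eball x r].

Definition beta F x r : R := r^-1 * inf [set flat_width F x r v | v in unitv].

Definition setdist y F : R := inf [set edist y z | z in F].

Definition bil_width F x r v : R :=
  Num.max (flat_width F x r v)
          (sup [set setdist y F | y in [set y | sdot x v y = 0] `&` eball x r]).

Definition beta_bil F x r : R := r^-1 * inf [set bil_width F x r v | v in unitv].

Definition optimal_normal F x r v : Prop :=
  unitv v /\ flat_width F x r v = inf [set flat_width F x r w | w in unitv].

Definition Dplus x r v t : set (R * R) := [set z | eball x r z /\ sdot x v z > t].
Definition Dminus x r v t : set (R * R) := [set z | eball x r z /\ - sdot x v z > t].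

Definition distinct_components (U A B : set (R * R)) : Prop :=
  [/\ exists p, A `<=` connected_component U p,
      exists q, B `<=` connected_component U q &
      forall a b, A a -> B b -> ~ connected_component U a b].

Definition separates F x r : Prop :=
  beta F x r <= 1/2 /\
  (exists v, optimal_normal F x r v) /\
  forall v, optimal_normal F x r v ->
    distinct_components (eball x r `\` F)
      (Dplus x r v (beta F x r * r)) (Dminus x r v (beta F x r * r)).

Definition rel_closed (K U : set (R * R)) : Prop :=
  K `<=` U /\ exists C : set (R * R), closed C /\ K = C `&` U.

End Flatness.

From Pilot Require Import Defs.
From mathcomp Require Import all_boot all_order all_algebra.
From mathcomp Require Import all_classical all_reals all_analysis.
From mathcomp Require Import ring lra.
Import Defs.
Set Implicit Arguments. Unset Strict Implicit.
Import Order.TTheory GRing.Theory Num.Theory.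
Import numFieldNormedType.Exports.
Local Open Scope classical_set_scope.
Local Open Scope ring_scope.

(* Bilateral flatness gives, at every point y of K near x0 and every dyadic
   scale rho = 5r/2^k, a line through y such that K and the line are within
   rho/100 of each other in B(y, rho).  Two such lines at nearby points and
   comparable scales make a small angle, because both pass close to two far
   apart points of K.  Hence their unit normals can be oriented coherently,
   scale by scale, starting from the optimal normal nu of beta_K(x0, r).  For z
   off K, take y in K almost closest to z and the scale comparable to
   dist(z, K): the side of the line on which z lies does not depend on these
   choices and is locally constant on B(x0, r) \ K.  It is + on the convex set
   D^+ and - on the convex set D^-, which therefore lie in distinct components. *)

Section RealFacts.
Variable R : realFieldType.
Implicit Types s t c e : R.

Lemma ler_norm_of_sqr s e : 0 <= e -> s ^+ 2 <= e ^+ 2 -> `|s| <= e.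
Proof. by move=> e0 h; rewrite ler_norml; apply/andP; split; nra. Qed.

Lemma ler_of_sqr s e : 0 <= e -> s ^+ 2 <= e ^+ 2 -> s <= e.
Proof. by move=> e0 h; have := ler_norm s; have := ler_norm_of_sqr e0 h; lra. Qed.

Lemma ltr0_addr_small s t : `|t| < `|s| -> (0 < s + t) = (0 < s).
Proof.
move=> h; have := ler_norm t; have := ler_norm (- t); rewrite normrN => t1 t2.
case: (ltrP 0 s) => s0.
  by rewrite (gtr0_norm s0) in h; apply/idP; lra.
by rewrite (ler0_norm s0) in h; apply/negbTE; rewrite -leNgt; lra.
Qed.

Lemma cauchy_schwarz2 (a1 a2 b1 b2 : R) :
  (a1 * b1 + a2 * b2) ^+ 2 <= (a1 ^+ 2 + a2 ^+ 2) * (b1 ^+ 2 + b2 ^+ 2).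
Proof.
have -> : (a1 ^+ 2 + a2 ^+ 2) * (b1 ^+ 2 + b2 ^+ 2) =
  (a1 * b1 + a2 * b2) ^+ 2 + (a1 * b2 - a2 * b1) ^+ 2 by ring.
by rewrite lerDl sqr_ge0.
Qed.

Lemma convex_comb_lt s t c (l : R) : s < c -> t < c -> 0 <= l <= 1 ->
  (1 - l) * s + l * t < c.
Proof.
move=> hs ht /andP[l0 l1]; case: (ltrP l 1) => hl.
  have : (1 - l) * s < (1 - l) * c by rewrite ltr_pM2l // subr_gt0.
  have : l * t <= l * c by rewrite ler_wpM2l // ltW.
  lra.
have -> : l = 1 by apply/le_anti; rewrite l1 hl.
by rewrite subrr mul0r add0r mul1r.
Qed.

End RealFacts.

Section EuclideanPlane.
Variable R : realType.
Implicit Types (x y z p q u v w : R * R) (e t : R).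

Definition dot u v : R := u.1 * v.1 + u.2 * v.2.
Definition cross u v : R := u.1 * v.2 - u.2 * v.1.

Lemma dotC u v : dot u v = dot v u.
Proof. by rewrite /dot; ring. Qed.

Lemma sqr_crossC u v : cross u v ^+ 2 = cross v u ^+ 2.
Proof. by rewrite /cross; ring. Qed.

Lemma unitv_dot_cross u v : unitv u -> unitv v -> dot u v ^+ 2 + cross u v ^+ 2 = 1.
Proof.
rewrite /unitv /dot /cross => hu hv.
have -> : (u.1 * v.1 + u.2 * v.2) ^+ 2 + (u.1 * v.2 - u.2 * v.1) ^+ 2 =
  (u.1 ^+ 2 + u.2 ^+ 2) * (v.1 ^+ 2 + v.2 ^+ 2) by ring.
by rewrite hu hv mulr1.
Qed.

Lemma unitvN v : unitv v -> unitv (- v).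
Proof. by rewrite /unitv /= !sqrrN. Qed.

Lemma sdotN x v y : sdot x (- v) y = - sdot x v y.
Proof. by rewrite /sdot /=; ring. Qed.

Lemma edist_sqr x y : edist x y ^+ 2 = (x.1 - y.1) ^+ 2 + (x.2 - y.2) ^+ 2.
Proof. by rewrite /edist sqr_sqrtr // addr_ge0 // sqr_ge0. Qed.

Lemma edist_ge0 x y : 0 <= edist x y.
Proof. exact: sqrtr_ge0. Qed.

Lemma edistC x y : edist x y = edist y x.
Proof. by rewrite /edist; congr Num.sqrt; ring. Qed.

Lemma edistxx x : edist x x = 0.
Proof. by rewrite /edist !subrr expr0n /= addr0 sqrtr0. Qed.

Lemma edist_le x y e : 0 <= e ->
  (x.1 - y.1) ^+ 2 + (x.2 - y.2) ^+ 2 <= e ^+ 2 -> edist x y <= e.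
Proof. by move=> e0 h; apply: ler_of_sqr => //; rewrite edist_sqr. Qed.

Lemma edist_lt x y e : 0 <= e ->
  (x.1 - y.1) ^+ 2 + (x.2 - y.2) ^+ 2 < e ^+ 2 -> edist x y < e.
Proof. by move=> e0; rewrite -edist_sqr; have := edist_ge0 x y; nra. Qed.

Lemma edist_norm_of_sqr x y s : s ^+ 2 = (x.1 - y.1) ^+ 2 + (x.2 - y.2) ^+ 2 ->
  edist x y = `|s|.
Proof. by rewrite /edist => <-; rewrite sqrtr_sqr. Qed.

Lemma norm_sub1_le_edist x y : `|x.1 - y.1| <= edist x y.
Proof.
by apply: ler_norm_of_sqr; rewrite ?edist_ge0 // edist_sqr lerDl sqr_ge0.
Qed.

Lemma norm_sub2_le_edist x y : `|x.2 - y.2| <= edist x y.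
Proof.
by apply: ler_norm_of_sqr; rewrite ?edist_ge0 // edist_sqr lerDr sqr_ge0.
Qed.

Lemma edist_triangle x y z : edist x z <= edist x y + edist y z.
Proof.
apply: edist_le; first by rewrite addr_ge0 // edist_ge0.
have p0 := edist_ge0 x y; have q0 := edist_ge0 y z.
have cs := cauchy_schwarz2 (x.1 - y.1) (x.2 - y.2) (y.1 - z.1) (y.2 - z.2).
rewrite -!edist_sqr in cs.
have hd : (x.1 - y.1) * (y.1 - z.1) + (x.2 - y.2) * (y.2 - z.2) <=
          edist x y * edist y z.
  by apply: ler_of_sqr; rewrite ?mulr_ge0 ?edist_ge0 // exprMn.
have -> : (x.1 - z.1) ^+ 2 + (x.2 - z.2) ^+ 2 =
  ((x.1 - y.1) ^+ 2 + (x.2 - y.2) ^+ 2) + ((y.1 - z.1) ^+ 2 + (y.2 - z.2) ^+ 2)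
  + 2 * ((x.1 - y.1) * (y.1 - z.1) + (x.2 - y.2) * (y.2 - z.2)) by ring.
rewrite -!edist_sqr; nra.
Qed.

Lemma norm_sdot_le x v y : unitv v -> `|sdot x v y| <= edist y x.
Proof.
move=> hv; apply: ler_norm_of_sqr; first exact: edist_ge0.
by rewrite edist_sqr; have := cauchy_schwarz2 (y.1 - x.1) (y.2 - x.2) v.1 v.2; rewrite hv mulr1.
Qed.

Lemma sqr_cross_mul_le u v (a1 a2 : R) : unitv u -> unitv v ->
  cross u v ^+ 2 * (a1 ^+ 2 + a2 ^+ 2) <=
  (`|a1 * u.1 + a2 * u.2| + `|a1 * v.1 + a2 * v.2|) ^+ 2.
Proof.
move=> hu hv; have hd := unitv_dot_cross hu hv.
move: hu hv hd; rewrite /unitv /dot /cross => hu hv hd.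
set A := a1 * u.1 + a2 * u.2; set B := a1 * v.1 + a2 * v.2.
set D := u.1 * v.1 + u.2 * v.2.
have -> : (u.1 * v.2 - u.2 * v.1) ^+ 2 * (a1 ^+ 2 + a2 ^+ 2) =
  A ^+ 2 * (v.1 ^+ 2 + v.2 ^+ 2) + B ^+ 2 * (u.1 ^+ 2 + u.2 ^+ 2) - 2 * A * B * D.
  by rewrite /A /B /D; ring.
rewrite hu hv !mulr1.
have hD : `|D| <= 1 by apply: ler_norm_of_sqr; rewrite // expr1n -hd lerDl sqr_ge0.
have hAB : - (A * B * D) <= `|A| * `|B|.
  apply: le_trans (ler_norm _) _; rewrite normrN !normrM.
  by rewrite -[leRHS]mulr1 ler_wpM2l ?mulr_ge0.
have -> : (`|A| + `|B|) ^+ 2 = A ^+ 2 + B ^+ 2 + 2 * (`|A| * `|B|).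
  by rewrite sqrrD !real_normK ?num_real //; ring.
lra.
Qed.

(* Two points of a thin strip around each of two lines, far apart, force the
   lines to be almost parallel. *)
Lemma sqr_cross_le_strips u v y y' q1 q2 (a b L : R) : unitv u -> unitv v ->
  `|sdot y u q1| <= a -> `|sdot y u q2| <= a ->
  `|sdot y' v q1| <= b -> `|sdot y' v q2| <= b ->
  0 <= L -> L <= edist q1 q2 -> cross u v ^+ 2 * L ^+ 2 <= (2 * a + 2 * b) ^+ 2.
Proof.
move=> hu hv h1 h2 h3 h4 L0 hL.
have := sqr_cross_mul_le (q1.1 - q2.1) (q1.2 - q2.2) hu hv.
have -> : (q1.1 - q2.1) * u.1 + (q1.2 - q2.2) * u.2 = sdot y u q1 - sdot y u q2.
  by rewrite /sdot; ring.
have -> : (q1.1 - q2.1) * v.1 + (q1.2 - q2.2) * v.2 = sdot y' v q1 - sdot y' v q2.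
  by rewrite /sdot; ring.
rewrite -edist_sqr => h.
have hA : `|sdot y u q1 - sdot y u q2| <= 2 * a.
  by apply: le_trans (ler_normB _ _) _; lra.
have hB : `|sdot y' v q1 - sdot y' v q2| <= 2 * b.
  by apply: le_trans (ler_normB _ _) _; lra.
apply: le_trans (le_trans _ h) _.
  by rewrite ler_wpM2l ?sqr_ge0 // ler_sqr ?nnegrE // (le_trans L0).
have := normr_ge0 (sdot y u q1 - sdot y u q2).
have := normr_ge0 (sdot y' v q1 - sdot y' v q2).
move=> n0 n1; rewrite ler_sqr ?nnegrE; lra.
Qed.

Lemma dot_gt0_of_cross u v : unitv u -> unitv v -> 0 <= dot u v ->
  cross u v ^+ 2 < 1 -> 0 < dot u v.
Proof.
move=> hu hv h0 h; have e := unitv_dot_cross hu hv.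
rewrite lt_neqAle h0 andbT; apply/negP => /eqP h1.
by rewrite -h1 expr0n /= add0r in e; lra.
Qed.

Lemma dot_ge_of_cross u v : unitv u -> unitv v -> 0 < dot u v ->
  cross u v ^+ 2 <= 1/100 -> 99/100 <= dot u v.
Proof.
move=> hu hv h0 h; have e := unitv_dot_cross hu hv.
have : dot u v ^+ 2 <= 1 by rewrite -e lerDl sqr_ge0.
nra.
Qed.

Lemma dot_gt0_trans u v w : unitv u -> unitv v -> unitv w ->
  cross u v ^+ 2 <= 1/10 -> cross v w ^+ 2 <= 1/10 ->
  0 < dot u v -> 0 < dot v w -> 0 < dot u w.
Proof.
move=> hu hv hw h1 h2 p1 p2.
have e1 := unitv_dot_cross hu hv; have e2 := unitv_dot_cross hv hw.
have -> : dot u w = dot u v * dot v w - cross u v * cross v w.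
  move: hv; rewrite /unitv /dot /cross => hv.
  rewrite -[LHS]mulr1 -hv; ring.
set P := dot u v in e1 p1 *; set Q := dot v w in e2 p2 *.
set X := cross u v in e1 h1 *; set Y := cross v w in e2 h2 *.
have hPQ : 9/10 <= P * Q.
  apply: ler_of_sqr; first by rewrite mulr_ge0 // ltW.
  have : (9/10) * (9/10) <= P ^+ 2 * Q ^+ 2 by apply: ler_pM; lra.
  by rewrite exprMn; lra.
have hXY : `|X * Y| <= 1/10.
  apply: ler_norm_of_sqr; first lra.
  have : X ^+ 2 * Y ^+ 2 <= (1/10) * (1/10) by apply: ler_pM; rewrite ?sqr_ge0.
  by rewrite exprMn; lra.
have := ler_norm (X * Y); lra.
Qed.

Lemma norm_sdot_sub_le y v y' v' z : unitv v -> unitv v' -> 99/100 <= dot v v' ->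
  `|sdot y' v' z - sdot y v z| <= `|sdot y v y'| + 3/20 * edist z y'.
Proof.
move=> hv hv' hvv.
set T := (z.1 - y'.1) * (v'.1 - v.1) + (z.2 - y'.2) * (v'.2 - v.2).
have -> : sdot y' v' z - sdot y v z = T + - sdot y v y' by rewrite /T /sdot; ring.
apply: le_trans (ler_normD _ _) _; rewrite normrN addrC lerD2l.
apply: ler_norm_of_sqr; first by rewrite mulr_ge0 ?edist_ge0.
apply: le_trans (cauchy_schwarz2 _ _ _ _) _; rewrite -edist_sqr exprMn mulrC.
apply: ler_wpM2r; first exact: sqr_ge0.
have -> : (v'.1 - v.1) ^+ 2 + (v'.2 - v.2) ^+ 2 =
  (v.1 ^+ 2 + v.2 ^+ 2) + (v'.1 ^+ 2 + v'.2 ^+ 2) - 2 * dot v v' by rewrite /dot; ring.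
by move: hv hv'; rewrite /unitv => -> ->; lra.
Qed.

Definition segment_pt (a b : R * R) t : R * R :=
  (a.1 + t * (b.1 - a.1), a.2 + t * (b.2 - a.2)).

Lemma continuous_segment_pt a b : continuous (segment_pt a b).
Proof.
move=> t.
have lin (c d : R) : (fun s : R => c + s * d) @ t --> c + t * d.
  by apply: cvgD; [exact: cvg_cst | apply: cvgMl; exact: cvg_id].
exact: cvg_pair (lin _ _) (lin _ _).
Qed.

Lemma connected_segment a b : connected [set segment_pt a b t | t in `[0, 1]].
Proof.
apply: connected_continuous_connected; first exact: segment_connected.
by apply: continuous_subspaceT; exact: continuous_segment_pt.
Qed.

Lemma segment_pt0 a b : segment_pt a b 0 = a.
Proof. by case: a => a1 a2; rewrite /segment_pt /= !mul0r !addr0. Qed.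

Lemma segment_pt1 a b : segment_pt a b 1 = b.
Proof. by case: a b => a1 a2 [b1 b2]; rewrite /segment_pt /= !mul1r !subrKC. Qed.

Lemma sdot_segment_pt x v a b t :
  sdot x v (segment_pt a b t) = (1 - t) * sdot x v a + t * sdot x v b.
Proof. by rewrite /sdot /segment_pt /=; ring. Qed.

Lemma edist_segment_pt_le a b c t : 0 <= t <= 1 ->
  edist (segment_pt a b t) c <= (1 - t) * edist a c + t * edist b c.
Proof.
move=> /andP[t0 t1].
have pa := edist_ge0 a c; have pb := edist_ge0 b c.
apply: edist_le; first by rewrite addr_ge0 // mulr_ge0 // subr_ge0.
have cs := cauchy_schwarz2 (a.1 - c.1) (a.2 - c.2) (b.1 - c.1) (b.2 - c.2).
rewrite -!edist_sqr in cs.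
have hd : (a.1 - c.1) * (b.1 - c.1) + (a.2 - c.2) * (b.2 - c.2) <= edist a c * edist b c.
  by apply: ler_of_sqr; rewrite ?mulr_ge0 // exprMn.
have -> : (a.1 + t * (b.1 - a.1) - c.1) ^+ 2 + (a.2 + t * (b.2 - a.2) - c.2) ^+ 2 =
  (1 - t) ^+ 2 * ((a.1 - c.1) ^+ 2 + (a.2 - c.2) ^+ 2)
  + t ^+ 2 * ((b.1 - c.1) ^+ 2 + (b.2 - c.2) ^+ 2)
  + 2 * (t * (1 - t)) * ((a.1 - c.1) * (b.1 - c.1) + (a.2 - c.2) * (b.2 - c.2)).
  by rewrite /segment_pt /=; ring.
rewrite -!edist_sqr.
have htt : 0 <= t * (1 - t) by rewrite mulr_ge0 // subr_ge0.
have := ler_wpM2l (mulr_ge0 (ler0n _ 2) htt) hd.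
have -> : ((1 - t) * edist a c + t * edist b c) ^+ 2 = (1 - t) ^+ 2 * edist a c ^+ 2
  + t ^+ 2 * edist b c ^+ 2 + 2%:R * (t * (1 - t)) * (edist a c * edist b c) by ring.
lra.
Qed.

Definition proj_line y v z : R * R := (z.1 - sdot y v z * v.1, z.2 - sdot y v z * v.2).

Lemma sdot_proj_line y v z : unitv v -> sdot y v (proj_line y v z) = 0.
Proof.
rewrite /unitv => hv.
have -> : 0 = sdot y v z * (1 - (v.1 ^+ 2 + v.2 ^+ 2)) by rewrite hv subrr mulr0.
by rewrite /proj_line /sdot /=; ring.
Qed.

Lemma edist_proj_line_le y v z : unitv v -> edist (proj_line y v z) y <= edist z y.
Proof.
rewrite /unitv => hv; apply: edist_le; first exact: edist_ge0.
rewrite edist_sqr /proj_line /=.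
have -> : (z.1 - sdot y v z * v.1 - y.1) ^+ 2 + (z.2 - sdot y v z * v.2 - y.2) ^+ 2 =
  (z.1 - y.1) ^+ 2 + (z.2 - y.2) ^+ 2 - sdot y v z ^+ 2 * (2 - (v.1 ^+ 2 + v.2 ^+ 2)).
  by rewrite /sdot; ring.
by rewrite hv; have := sqr_ge0 (sdot y v z); lra.
Qed.

Lemma edist_proj_line y v z : unitv v -> edist z (proj_line y v z) = `|sdot y v z|.
Proof.
rewrite /unitv => hv; apply: edist_norm_of_sqr; rewrite /proj_line /=.
by rewrite -[LHS]mulr1 -hv; ring.
Qed.

Lemma unitv_polar w : unitv w -> exists2 th, -pi <= th <= pi & w = (cos th, sin th).
Proof.
case: w => w1 w2; rewrite /unitv /= => hw.
have hb : -1 <= w1 <= 1.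
  by rewrite -ler_norml; apply: ler_norm_of_sqr; rewrite // expr1n -hw lerDl sqr_ge0.
have [/andP[a0 api] ca] := acos_def hb.
have sa : sin (acos w1) = `|w2|.
  by rewrite sin_acos // -hw addrC addKr sqrtr_sqr.
case: (lerP 0 w2) => hw2.
  by exists (acos w1); [lra | rewrite ca sa ger0_norm].
by exists (- acos w1); [lra | rewrite cosN sinN ca sa ltr0_norm ?opprK].
Qed.

End EuclideanPlane.

Lemma nbhs_edist (R : realType) (z : R * R) e : 0 < e -> nbhs z [set w | edist z w < e].
Proof.
move=> e0; apply: filterS (nbhsx_ballx z (e / 2) _); last by lra.
case: z => z1 z2 [w1 w2]; rewrite /ball /= => -[h1 h2].
apply: edist_lt; first lra.
have sq (a : R) : `|a| < e / 2 -> a ^+ 2 < e ^+ 2 / 4.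
  move=> ha; rewrite -real_normK ?num_real //.
  have -> : e ^+ 2 / 4 = (e / 2) ^+ 2 by rewrite expr_div_n; congr (_ / _); rewrite expr2; lra.
  by rewrite ltr_sqr ?nnegrE //; lra.
have := sq _ h1; have := sq _ h2; have : 0 < e ^+ 2 by rewrite exprn_gt0.
rewrite /=; lra.
Qed.

Lemma locally_constant_connected (T : topologicalType) (f : T -> bool) (U C : set T) :
  (forall t, U t -> nbhs t [set w | f w = f t]) ->
  connected C -> C `<=` U -> forall a b, C a -> C b -> f a = f b.
Proof.
move=> hloc hC hCU a b Ca Cb.
pose B := C `&` [set w | f w = f a].
suff : B b by case.
have -> : B = C; last by [].
apply: hC; first by exists a.
- exists ([set w | f w = f a])°; first exact: open_interior.
  rewrite /B; apply/seteqP; split => w [Cw hw]; split => //.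
    by rewrite /interior /= -hw; exact: hloc (hCU _ Cw).
  exact: nbhs_singleton hw.
- exists (~` ([set w | f w <> f a])°); first exact/open_closedC/open_interior.
  rewrite /B; apply/seteqP; split => w [Cw hw]; split => //.
    by move=> /nbhs_singleton.
  case: (boolP (f w == f a)) => [/eqP //|/eqP hne].
  exfalso; apply: hw; rewrite /interior /=.
  by apply: filterS (hloc _ (hCU _ Cw)) => w' /= ->.
Qed.

Section FlatLines.
Variables (R : realType) (K : set (R * R)).
Hypothesis K_neq0 : K !=set0.
Implicit Types (x y z p q v w : R * R) (rho : R).

Lemma has_sup_flat_width x rho v : K x -> 0 < rho -> unitv v ->
  has_sup [set ldist x v y | y in K `&` eball x rho].
Proof.
move=> Kx rho0 hv; split.
  by exists (ldist x v x), x => //; split => //; rewrite /eball /= edistxx.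
exists rho => _ [y [Ky hy] <-].
by apply: le_trans (norm_sdot_le _ _ hv) _; exact: ltW.
Qed.

Lemma flat_width_ub x rho v q : K x -> 0 < rho -> unitv v -> K q -> edist q x < rho ->
  `|sdot x v q| <= flat_width K x rho v.
Proof.
move=> Kx rho0 hv Kq hq; apply: sup_upper_bound; first exact: has_sup_flat_width.
by exists q.
Qed.

Lemma flat_width_ge0 x rho v : K x -> 0 < rho -> unitv v -> 0 <= flat_width K x rho v.
Proof.
move=> Kx rho0 hv; apply: le_trans (flat_width_ub Kx rho0 hv Kx _) => //.
by rewrite edistxx.
Qed.

Lemma flat_width_le x rho v c : K x -> 0 < rho ->
  (forall q, K q -> edist q x < rho -> `|sdot x v q| <= c) -> flat_width K x rho v <= c.
Proof.
move=> Kx rho0 h; apply: ge_sup; last by move=> _ [q [Kq hq] <-]; apply: h.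
by exists (ldist x v x), x => //; split => //; rewrite /eball /= edistxx.
Qed.

Lemma setdist_le y q : K q -> setdist y K <= edist y q.
Proof.
by move=> Kq; apply: ge_inf; [exists 0 => _ [q0 _ <-]; exact: edist_ge0 | exists q].
Qed.

Lemma setdist_ge0 y : 0 <= setdist y K.
Proof.
have [q Kq] := K_neq0; apply: lb_le_inf; first by exists (edist y q), q.
by move=> _ [q0 _ <-]; exact: edist_ge0.
Qed.

Lemma setdist_approx y e : 0 < e -> exists2 q, K q & edist y q < setdist y K + e.
Proof.
move=> e0; have [q Kq] := K_neq0.
have hinf : has_inf [set edist y q | q in K].
  by split; [exists (edist y q), q | exists 0 => _ [q0 _ <-]; exact: edist_ge0].
by have [_ [q' Kq' <-] ?] := inf_adherent e0 hinf; exists q'.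
Qed.

Lemma setdist_lipschitz y y' : setdist y K <= setdist y' K + edist y y'.
Proof.
have [q Kq] := K_neq0; rewrite -lerBlDr; apply: lb_le_inf; first by exists (edist y' q), q.
move=> _ [q' Kq' <-]; rewrite lerBlDr; apply: le_trans (setdist_le y Kq') _.
by rewrite addrC edist_triangle.
Qed.

Lemma setdist_gt0 z : nbhs z (~` K) -> 0 < setdist z K.
Proof.
move/nbhs_ballP => [e /= e0 he]; apply: lt_le_trans e0 _.
have [q0 Kq0] := K_neq0; apply: lb_le_inf; first by exists (edist z q0), q0.
move=> _ [q Kq <-]; rewrite leNgt; apply/negP => hq; apply: (he q) => //.
by split; apply: le_lt_trans hq; [exact: norm_sub1_le_edist | exact: norm_sub2_le_edist].
Qed.

Definition flat_line y rho v : Prop :=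
  [/\ unitv v,
      forall q, K q -> edist q y < rho -> `|sdot y v q| < rho / 100 &
      forall p, sdot y v p = 0 -> edist p y < rho -> exists2 q, K q & edist p q < rho / 100].

Lemma flat_line_of_bil_width y rho v : K y -> 0 < rho -> unitv v ->
  bil_width K y rho v < rho / 100 -> flat_line y rho v.
Proof.
move=> Ky rho0 hv; rewrite /bil_width gt_max => /andP[hf hl]; split => //.
  by move=> q Kq hq; apply: le_lt_trans (flat_width_ub Ky rho0 hv Kq hq) hf.
move=> p hp hpy.
have hs : setdist p K < rho / 100.
  apply: le_lt_trans hl; apply: sup_upper_bound; last by exists p.
  split; first by exists (setdist p K), p.
  exists rho => _ [p' [_ hp'] <-]; apply: le_trans (setdist_le p' Ky) _.
  exact: ltW.
have e0 : 0 < rho / 100 - setdist p K by rewrite subr_gt0.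
have [q Kq hq] := setdist_approx p e0.
by exists q => //; rewrite addrC subrK in hq.
Qed.

Lemma unitv10 : unitv ((1 : R), (0 : R)).
Proof. by rewrite /unitv /= expr1n expr0n /= addr0. Qed.

Lemma bil_width_ge_flat_width x rho v : flat_width K x rho v <= bil_width K x rho v.
Proof. by rewrite /bil_width le_max lexx. Qed.

Lemma exists_flat_line y rho : K y -> 0 < rho -> beta_bil K y rho < 1/100 ->
  exists v, flat_line y rho v.
Proof.
move=> Ky rho0 hb.
set S := [set bil_width K y rho v | v in @unitv R].
have hS : has_inf S.
  split; first by exists (bil_width K y rho (1, 0)), (1, 0) => //; exact: unitv10.
  exists 0 => _ [v hv <-].
  exact: le_trans (flat_width_ge0 Ky rho0 hv) (bil_width_ge_flat_width _ _ _).
have hi : inf S < rho / 100.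
  by move: hb; rewrite /beta_bil -/S mulrC ltr_pdivrMr // mulrC mul1r.
have e0 : 0 < rho / 100 - inf S by rewrite subr_gt0.
have [_ [v hv <-] hlt] := inf_adherent e0 hS.
by exists v; apply: flat_line_of_bil_width => //; rewrite addrC subrK in hlt.
Qed.

Lemma beta_le_beta_bil x rho : K x -> 0 < rho -> beta K x rho <= beta_bil K x rho.
Proof.
move=> Kx rho0; apply: ler_wpM2l; first by rewrite invr_ge0 ltW.
apply: lb_le_inf; first by exists (bil_width K x rho (1, 0)), (1, 0) => //; exact: unitv10.
move=> _ [v hv <-]; apply: le_trans (bil_width_ge_flat_width _ _ _).
apply: ge_inf; last by exists v.
by exists 0 => _ [w hw <-]; exact: flat_width_ge0.
Qed.

Lemma flat_lineN y rho v : flat_line y rho v -> flat_line y rho (- v).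
Proof.
case=> hv h1 h2; split; first exact: unitvN.
- by move=> q Kq hq; rewrite sdotN normrN; exact: h1.
- by move=> p; rewrite sdotN => /eqP; rewrite oppr_eq0 => /eqP; exact: h2.
Qed.

(* Points of the line at distance [l rho] on either side of [y] are close to
   [K], which yields two far apart points of [K] near [y]. *)
Lemma flat_line_far_points y rho v (l : R) : flat_line y rho v -> 0 < rho -> 0 < l -> l < 1 ->
  exists q1 q2, [/\ K q1, K q2, edist q1 y < (l + 1/100) * rho,
    edist q2 y < (l + 1/100) * rho & (2 * l - 1/50) * rho < edist q1 q2].
Proof.
move=> [hv _ hl] rho0 l0 l1; move: (hv); rewrite /unitv => hv'.
pose p1 := (y.1 - l * rho * v.2, y.2 + l * rho * v.1).
pose p2 := (y.1 + l * rho * v.2, y.2 - l * rho * v.1).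
have hlr : 0 <= l * rho by rewrite mulr_ge0 // ltW.
have sq (p q : R * R) s : 0 <= s ->
    (p.1 - q.1) ^+ 2 + (p.2 - q.2) ^+ 2 = s ^+ 2 * (v.1 ^+ 2 + v.2 ^+ 2) -> edist p q = s.
  by move=> s0; rewrite hv' mulr1 => /esym/edist_norm_of_sqr ->; rewrite ger0_norm.
have ep1 : edist p1 y = l * rho by apply: sq => //; rewrite /p1 /=; ring.
have ep2 : edist p2 y = l * rho by apply: sq => //; rewrite /p2 /=; ring.
have ep12 : edist p1 p2 = 2 * (l * rho).
  by apply: sq; [rewrite mulr_ge0 | rewrite /p1 /p2 /=; ring].
have lr : l * rho < rho by rewrite -[ltRHS]mul1r ltr_pM2r.
have [q1 Kq1 hq1] : exists2 q, K q & edist p1 q < rho / 100.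
  by apply: hl; [rewrite /sdot /p1 /=; ring | rewrite ep1].
have [q2 Kq2 hq2] : exists2 q, K q & edist p2 q < rho / 100.
  by apply: hl; [rewrite /sdot /p2 /=; ring | rewrite ep2].
exists q1, q2; split => //.
- by have := edist_triangle q1 p1 y; rewrite (edistC q1 p1) ep1; lra.
- by have := edist_triangle q2 p2 y; rewrite (edistC q2 p2) ep2; lra.
- have := edist_triangle p1 q1 p2; have := edist_triangle q1 q2 p2.
  by rewrite ep12 (edistC q2 p2); lra.
Qed.

Lemma sqr_cross_le_of_flat_line y rho v y1 n1 y2 n2 (l c1 c2 : R) :
  flat_line y rho v -> unitv n1 -> unitv n2 -> 0 < rho -> 1/100 <= l -> l < 1 ->
  (forall q, K q -> edist q y < (l + 1/100) * rho -> `|sdot y1 n1 q| <= c1 * rho) ->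
  (forall q, K q -> edist q y < (l + 1/100) * rho -> `|sdot y2 n2 q| <= c2 * rho) ->
  cross n1 n2 ^+ 2 * ((2 * l - 1/50) * (2 * l - 1/50)) <=
  (2 * c1 + 2 * c2) * (2 * c1 + 2 * c2).
Proof.
move=> hy hn1 hn2 rho0 l_lb l_ub strip1 strip2.
have l0 : 0 < l by lra.
have [q1 [q2 [Kq1 Kq2 d1 d2 d12]]] := flat_line_far_points hy rho0 l0 l_ub.
have L0 : 0 <= (2 * l - 1/50) * rho by rewrite mulr_ge0 ?(ltW rho0) //; lra.
have := sqr_cross_le_strips hn1 hn2 (strip1 _ Kq1 d1) (strip1 _ Kq2 d2)
  (strip2 _ Kq1 d1) (strip2 _ Kq2 d2) L0 (ltW d12).
rewrite -!expr2 !exprMn.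
have -> : 2 * (c1 * rho) + 2 * (c2 * rho) = (2 * c1 + 2 * c2) * rho by ring.
by rewrite exprMn mulrA ler_pM2r // exprn_gt0.
Qed.

Definition flat_normal y rho : R * R := xget (1, 0) [set v | flat_line y rho v].

Lemma flat_normalP y rho : (exists v, flat_line y rho v) -> flat_line y rho (flat_normal y rho).
Proof.
by move=> [v hv]; rewrite /flat_normal; case: xgetP => [w -> //| /(_ v)].
Qed.

End FlatLines.

Section OptimalNormal.
Variables (R : realType) (K : set (R * R)) (x : R * R) (rho : R).
Hypotheses (Kx : K x) (rho_gt0 : 0 < rho).

Lemma flat_width_lipschitz v w : unitv w ->
  flat_width K x rho v <= flat_width K x rho w + rho * (`|v.1 - w.1| + `|v.2 - w.2|).
Proof.
move=> hw; apply: flat_width_le => // q Kq hq.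
have h1 : `|q.1 - x.1| <= rho := ltW (le_lt_trans (norm_sub1_le_edist q x) hq).
have h2 : `|q.2 - x.2| <= rho := ltW (le_lt_trans (norm_sub2_le_edist q x) hq).
have -> : sdot x v q = sdot x w q + ((q.1 - x.1) * (v.1 - w.1) + (q.2 - x.2) * (v.2 - w.2)).
  by rewrite /sdot; ring.
apply: le_trans (ler_normD _ _) _; apply: lerD; first exact: flat_width_ub.
apply: le_trans (ler_normD _ _) _; rewrite !normrM mulrDr.
by apply: lerD; apply: ler_wpM2r.
Qed.

Let flat_width_angle (th : R) := flat_width K x rho (cos th, sin th).

Lemma unitv_cos_sin (th : R) : unitv (cos th, sin th).
Proof. exact: cos2Dsin2. Qed.

Lemma continuous_flat_width_angle : continuous flat_width_angle.
Proof.
have lip th t : `|flat_width_angle th - flat_width_angle t| <=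
    rho * (`|cos th - cos t| + `|sin th - sin t|).
  rewrite /flat_width_angle ler_norml; apply/andP; split.
    have := @flat_width_lipschitz (cos t, sin t) _ (unitv_cos_sin th).
    by rewrite /= (distrC (cos t)) (distrC (sin t)); lra.
  by have := @flat_width_lipschitz (cos th, sin th) _ (unitv_cos_sin t); rewrite /=; lra.
move=> th; apply/cvgrPdist_lt => e e0.
have e1 : 0 < e / (4 * rho) by rewrite divr_gt0 // mulr_gt0.
move/cvgrPdist_lt: (@continuous_cos _ th) => /(_ _ e1).
move/cvgrPdist_lt: (@continuous_sin _ th) => /(_ _ e1).
apply: filterS2 => t t1 t2; apply: le_lt_trans (lip th t) _.
have : rho * (`|cos th - cos t| + `|sin th - sin t|) < rho * (e / (4 * rho) + e / (4 * rho)).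
  by rewrite ltr_pM2l // ltrD.
have -> : rho * (e / (4 * rho) + e / (4 * rho)) = e / 2 by field; rewrite gt_eqF.
lra.
Qed.

Lemma exists_optimal_normal : exists v, optimal_normal K x rho v.
Proof.
have hpi : - pi <= (pi : R) by have := pi_ge0 R; lra.
have [c _ hmin] := EVT_min hpi (continuous_subspaceT continuous_flat_width_angle).
exists (cos c, sin c); split; first exact: unitv_cos_sin.
apply/le_anti/andP; split.
  apply: lb_le_inf; first by exists (flat_width_angle c), (cos c, sin c); first exact: unitv_cos_sin.
  move=> _ [w /unitv_polar [th hth ->] <-]; apply: hmin.
  by rewrite in_itv.
apply: ge_inf; last by exists (cos c, sin c); first exact: unitv_cos_sin.
by exists 0 => _ [w hw <-]; exact: flat_width_ge0.
Qed.

End OptimalNormal.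

Section Separation.
Variables (R : realType) (x0 : R * R) (r eps0 : R) (K : set (R * R)).
Hypotheses (r_gt0 : 0 < r) (eps0_lt : eps0 < 1/100) (Kx0 : K x0).
Hypothesis beta_bil_small : forall x rho, K x -> edist x x0 < 5 * r -> 0 < rho ->
  rho <= 5 * r -> beta_bil K x rho <= eps0.
Hypothesis K_closed : rel_closed K (eball x0 (10 * r)).
Implicit Types (y z p q v w : R * R) (rho : R) (b : bool).

(* [lra] does not use section hypotheses, so they are passed explicitly. *)
Local Ltac rlra := move: r_gt0 eps0_lt => ? ?; lra.

Let K_neq0 : K !=set0. Proof. by exists x0. Qed.

Lemma exists_flat_line_near y rho : K y -> edist y x0 < 5 * r -> 0 < rho -> rho <= 5 * r ->
  exists v, flat_line K y rho v.
Proof.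
move=> Ky hy rho0 rho5; apply: exists_flat_line => //.
exact: le_lt_trans (beta_bil_small Ky hy rho0 rho5) eps0_lt.
Qed.

Lemma beta0_le : beta K x0 r <= eps0.
Proof.
apply: le_trans (beta_le_beta_bil Kx0 r_gt0) _.
by apply: beta_bil_small => //; [rewrite edistxx | ]; rlra.
Qed.

Lemma beta0_mul_lt : beta K x0 r * r < r / 100.
Proof.
have := ler_wpM2r (ltW r_gt0) beta0_le.
have : eps0 * r < 1/100 * r by rewrite ltr_pM2r.
lra.
Qed.

Lemma sqr_cross_flat_lines y y' rho rho' v v' :
  flat_line K y rho v -> flat_line K y' rho' v' -> 0 < rho -> rho <= rho' ->
  rho' <= 2 * rho -> edist y y' < 3/5 * rho -> cross v v' ^+ 2 <= 1/100.
Proof.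
move=> hy hy' rho0 le_rho le_rho' hyy.
have [hv hf _] := hy; have [hv' hf' _] := hy'.
have l_lb : 1/100 <= 1/3 :> R by lra.
have l_ub : 1/3 < 1 :> R by lra.
have strip1 q : K q -> edist q y < (1/3 + 1/100) * rho -> `|sdot y v q| <= 1/100 * rho.
  by move=> Kq hq; apply: ltW; apply: lt_le_trans (hf _ Kq _) _; lra.
have strip2 q : K q -> edist q y < (1/3 + 1/100) * rho -> `|sdot y' v' q| <= 1/50 * rho.
  move=> Kq hq; have := edist_triangle q y y' => tri.
  by apply: ltW; apply: lt_le_trans (hf' _ Kq _) _; lra.
have := sqr_cross_le_of_flat_line hy hv hv' rho0 l_lb l_ub strip1 strip2.
have := sqr_ge0 (cross v v'); lra.
Qed.

Definition scale k : R := 5 * r / 2 ^+ k.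

Lemma scale_gt0 k : 0 < scale k.
Proof. by rewrite /scale divr_gt0 ?exprn_gt0 //; rlra. Qed.

Lemma scale0 : scale 0 = 5 * r.
Proof. by rewrite /scale expr0 divr1. Qed.

Lemma scaleS k : scale k.+1 = scale k / 2.
Proof. by rewrite /scale exprS invfM mulrA mulrAC. Qed.

Lemma scale_le m n : (m <= n)%N -> scale n <= scale m.
Proof.
move=> /subnKC <-; elim: (n - m)%N => [|k IH]; first by rewrite addn0.
by rewrite addnS scaleS; have := scale_gt0 (m + k); lra.
Qed.

Lemma scale_le5 k : scale k <= 5 * r.
Proof. by rewrite -scale0 scale_le. Qed.

Lemma scale_between c : 0 < c -> c <= scale 0 -> exists k, c <= scale k /\ scale k.+1 < c.
Proof.
move=> c0 cs; apply: contrapT => nex.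
have all_le k : c <= scale k.
  elim: k => // k IH; apply: contrapT => /negP; rewrite -ltNge => lt.
  by apply: nex; exists k.
pose N := Num.Def.archi_bound (5 * r / c).
have hN : 5 * r / c < N%:R by apply: archi_boundP; rewrite divr_ge0 // ?ltW //; rlra.
have h2 : N%:R <= 2 ^+ N :> R by rewrite -natrX ler_nat ltnW // ltn_expl.
have := all_le N; rewrite /scale ler_pdivlMr ?exprn_gt0 // => hle.
rewrite ltr_pdivrMr // in hN.
have : c * N%:R <= c * 2 ^+ N by rewrite ler_pM2l.
lra.
Qed.

Section CoherentNormals.
Variable nu : R * R.
Hypothesis nu_opt : optimal_normal K x0 r nu.

Lemma unitv_nu : unitv nu.
Proof. by case: nu_opt. Qed.

Lemma nu_strip q : K q -> edist q x0 < r -> `|sdot x0 nu q| <= beta K x0 r * r.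
Proof.
move=> Kq hq; case: nu_opt => hu hw.
rewrite /beta mulrAC mulVf ?mul1r ?gt_eqF // -hw.
exact: flat_width_ub.
Qed.

Lemma sqr_cross_nu y rho n : flat_line K y rho n -> rho <= 5 * r ->
  edist y x0 + 91/100 * r < rho -> cross n nu ^+ 2 <= 1/100.
Proof.
move=> hy rho5 hyx; have [hn hf _] := hy.
have [w hw] : exists w, flat_line K x0 r w.
  by apply: exists_flat_line_near => //; [rewrite edistxx|]; rlra.
have strip1 q : K q -> edist q x0 < (9/10 + 1/100) * r -> `|sdot y n q| <= 1/20 * r.
  move=> Kq hq; have := edist_triangle q x0 y; rewrite (edistC x0 y) => hqy.
  by apply: ltW; apply: lt_le_trans (hf _ Kq _) _; rlra.
have strip2 q : K q -> edist q x0 < (9/10 + 1/100) * r ->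
    `|sdot x0 nu q| <= 1/100 * r.
  move=> Kq hq; apply: le_trans (nu_strip Kq _) _; first by rlra.
  by have := beta0_mul_lt; rlra.
have l_lb : 1/100 <= 9/10 :> R by lra.
have l_ub : 9/10 < 1 :> R by lra.
have := sqr_cross_le_of_flat_line hw hn unitv_nu r_gt0 l_lb l_ub strip1 strip2.
have := sqr_ge0 (cross n nu); lra.
Qed.

Definition align a v : R * R := if 0 <= dot a v then v else - v.

Lemma flat_line_align a y rho v : flat_line K y rho v -> flat_line K y rho (align a v).
Proof. by rewrite /align; case: ifP => _ //; exact: flat_lineN. Qed.

Lemma dot_align_ge0 a v : 0 <= dot a (align a v).
Proof.
rewrite /align; case: ifP => // /negbT; rewrite -ltNge => lt0.
by rewrite /dot /= !mulrN -opprD oppr_ge0 ltW.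
Qed.

Fixpoint normal k y : R * R :=
  align (if k is k'.+1 then normal k' y else nu) (flat_normal K y (scale k)).

Definition near_x0 y : Prop := K y /\ edist y x0 < 3 * r.

Lemma flat_line_normal k y : near_x0 y -> flat_line K y (scale k) (normal k y).
Proof.
move=> [Ky hy]; case: k => [|k] /=; apply: flat_line_align; apply: flat_normalP;
  by apply: exists_flat_line_near; rewrite ?scale_gt0 ?scale_le5 //; rlra.
Qed.

Lemma unitv_normal k y : near_x0 y -> unitv (normal k y).
Proof. by move/(flat_line_normal k); case. Qed.

Lemma sqr_cross_normal0_nu y : near_x0 y -> cross (normal 0 y) nu ^+ 2 <= 1/100.
Proof.
move=> hy; apply: sqr_cross_nu (flat_line_normal 0 hy) _ _; rewrite scale0 //.
by case: hy; rlra.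
Qed.

Lemma dot_nu_normal0_gt0 y : near_x0 y -> 0 < dot nu (normal 0 y).
Proof.
move=> hy; apply: dot_gt0_of_cross unitv_nu (unitv_normal 0 hy) _ _.
  exact: dot_align_ge0.
by rewrite sqr_crossC; have := sqr_cross_normal0_nu hy; lra.
Qed.

Lemma sqr_cross_normals y y' k k' : near_x0 y -> near_x0 y' -> (k' <= k <= k'.+1)%N ->
  edist y y' < 3/5 * scale k -> cross (normal k y) (normal k' y') ^+ 2 <= 1/100.
Proof.
move=> hy hy' hk hyy.
apply: sqr_cross_flat_lines (flat_line_normal k hy) (flat_line_normal k' hy') _ _ _ hyy.
- exact: scale_gt0.
- by apply: scale_le; case/andP: hk.
- by case/andP: hk => _ /scale_le; rewrite scaleS; lra.
Qed.

Lemma dot_normalS_gt0 k y : near_x0 y -> 0 < dot (normal k y) (normal k.+1 y).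
Proof.
move=> hy; apply: dot_gt0_of_cross (unitv_normal k hy) (unitv_normal k.+1 hy) _ _.
  exact: dot_align_ge0.
rewrite sqr_crossC; have := @sqr_cross_normals y y k.+1 k hy hy.
by rewrite edistxx ltnSn leqnSn => /(_ isT (mulr_gt0 _ (scale_gt0 _))); lra.
Qed.

Lemma dot_normal_gt0 k y y' : near_x0 y -> near_x0 y' -> edist y y' < 3/5 * scale k ->
  0 < dot (normal k y) (normal k y').
Proof.
elim: k y y' => [|k IH] y y' hy hy' hyy.
  have c1 := sqr_cross_normal0_nu hy; have c2 := sqr_cross_normal0_nu hy'.
  rewrite sqr_crossC in c2.
  apply: dot_gt0_trans (unitv_normal 0 hy) unitv_nu (unitv_normal 0 hy') _ _ _
    (dot_nu_normal0_gt0 hy'); try lra.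
  by rewrite dotC; exact: dot_nu_normal0_gt0.
have s_le := scale_le (leqnSn k); have s0 := scale_gt0 k.+1.
have near k1 k2 z z' : near_x0 z -> near_x0 z' -> (k2 <= k1 <= k2.+1)%N ->
    edist z z' < 3/5 * scale k1 -> cross (normal k1 z) (normal k2 z') ^+ 2 <= 1/10.
  by move=> hz hz' hk hzz; have := sqr_cross_normals hz hz' hk hzz; lra.
have u j z : near_x0 z -> unitv (normal j z) by move=> hz; exact: unitv_normal.
have dkk' : 0 < dot (normal k y) (normal k y') by apply: IH => //; lra.
have dSk : 0 < dot (normal k.+1 y) (normal k y').
  apply: dot_gt0_trans (u _ _ hy) (u _ _ hy) (u _ _ hy') _ _ _ dkk'.
  - by apply: near; rewrite ?edistxx ?leqnn ?leqnSn //; lra.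
  - by apply: near; rewrite ?leqnn ?leqnSn //; lra.
  - by rewrite dotC; exact: dot_normalS_gt0.
apply: dot_gt0_trans (u _ _ hy) (u _ _ hy') (u _ _ hy') _ _ dSk (dot_normalS_gt0 k hy').
- by apply: near; rewrite ?leqnSn ?ltnSn.
- by rewrite sqr_crossC; apply: near; rewrite ?edistxx ?leqnn ?leqnSn //; lra.
Qed.

Definition admissible z y k : Prop :=
  [/\ near_x0 y, edist z y < 11/10 * setdist z K,
      4 * setdist z K <= scale k & scale k <= 10 * setdist z K].

Lemma setdist_gt0_admissible z y k : admissible z y k -> 0 < setdist z K.
Proof. by case=> _ hzy _ _; have := edist_ge0 z y; have := setdist_ge0 K_neq0 z; lra. Qed.

Lemma edist_admissible z y k y' k' : admissible z y k -> admissible z y' k' ->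
  edist y y' < 22/10 * setdist z K.
Proof.
case=> _ h1 _ _ [_ h2 _ _].
by have := edist_triangle y z y'; rewrite (edistC y z); lra.
Qed.

Lemma norm_sdot_normal_ge z y k : admissible z y k ->
  9/10 * setdist z K <= `|sdot y (normal k y) z|.
Proof.
move=> ha; have d0 := setdist_gt0_admissible ha; case: ha => hy hzy h4 h10.
have [hn _ hl] := flat_line_normal k hy.
have hp : edist (proj_line y (normal k y) z) y < scale k.
  by apply: le_lt_trans (edist_proj_line_le _ _ hn) _; lra.
have [q Kq hq] := hl _ (sdot_proj_line y z hn) hp.
have := edist_triangle z (proj_line y (normal k y) z) q.
by rewrite edist_proj_line // => hzq; have := setdist_le z Kq; lra.
Qed.

Lemma admissible_same_side z y k y' k' : admissible z y k -> admissible z y' k' ->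
  99/100 <= dot (normal k y) (normal k' y') ->
  (0 < sdot y (normal k y) z) = (0 < sdot y' (normal k' y') z).
Proof.
move=> ha ha' hd.
have d0 := setdist_gt0_admissible ha; have l1 := norm_sdot_normal_ge ha.
have dyy := edist_admissible ha ha'.
case: (ha) => hy _ h4 h10; case: (ha') => hy' hzy' _ _.
have [hn hf _] := flat_line_normal k hy.
have hW : `|sdot y (normal k y) y'| < setdist z K / 10.
  have hyy' : edist y' y < scale k by rewrite edistC; lra.
  by apply: lt_le_trans (hf _ hy'.1 hyy') _; lra.
have := norm_sdot_sub_le y y' z hn (unitv_normal k' hy') hd.
set s := sdot y _ z; set s' := sdot y' _ z => hss.
have hlt : `|s' - s| < `|s|.
  by apply: le_lt_trans hss _; apply: lt_le_trans l1; have := edist_ge0 z y'; lra.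
by rewrite -(ltr0_addr_small hlt) subrKC.
Qed.

Lemma admissible_scale_le z y k y' k' : admissible z y k -> admissible z y' k' -> (k' <= k.+1)%N.
Proof.
move=> ha [_ _ h4 _]; have d0 := setdist_gt0_admissible ha; case: ha => _ _ _ h10.
rewrite leqNgt; apply/negP => /scale_le.
by rewrite !scaleS; lra.
Qed.

Lemma dot_normal_admissible z y k y' k' : admissible z y k -> admissible z y' k' ->
  (k <= k' <= k.+1)%N -> 99/100 <= dot (normal k y) (normal k' y').
Proof.
move=> ha ha' hk; have d0 := setdist_gt0_admissible ha.
have dyy := edist_admissible ha ha'.
case: (ha) => hy _ h4 _; case: (ha') => hy' _ h4' _.
have dkk : 0 < dot (normal k y) (normal k y') by apply: dot_normal_gt0 => //; lra.
have ckk : cross (normal k y) (normal k y') ^+ 2 <= 1/100.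
  by apply: sqr_cross_normals; rewrite ?leqnn ?leqnSn //; lra.
case/andP: hk; rewrite leq_eqVlt => /orP[/eqP <- _|hlt hle].
  exact: dot_ge_of_cross (unitv_normal k hy) (unitv_normal k hy') dkk ckk.
have ek : k' = k.+1 by apply/eqP; rewrite eqn_leq hle hlt.
subst k'.
have ck' : cross (normal k.+1 y') (normal k y') ^+ 2 <= 1/100.
  by apply: sqr_cross_normals; rewrite ?edistxx ?leqnn ?leqnSn // mulr_gt0 ?scale_gt0.
have ckS : cross (normal k.+1 y') (normal k y) ^+ 2 <= 1/100.
  by apply: sqr_cross_normals; rewrite ?leqnn ?leqnSn // edistC; lra.
apply: dot_ge_of_cross (unitv_normal k hy) (unitv_normal k.+1 hy') _ _; last first.
  by rewrite sqr_crossC.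
apply: dot_gt0_trans (unitv_normal k hy) (unitv_normal k hy') (unitv_normal k.+1 hy') _ _
  dkk (dot_normalS_gt0 k hy'); [lra | rewrite sqr_crossC; lra].
Qed.

Lemma admissible_sign_eq z y k y' k' : admissible z y k -> admissible z y' k' ->
  (0 < sdot y (normal k y) z) = (0 < sdot y' (normal k' y') z).
Proof.
wlog hk : y k y' k' / (k <= k')%N.
  move=> wlog ha ha'; case: (leqP k k') => hk; first exact: wlog.
  by symmetry; apply: wlog => //; exact: ltnW.
move=> ha ha'; apply: (admissible_same_side ha ha').
by apply: (dot_normal_admissible ha ha'); rewrite hk (admissible_scale_le ha ha').
Qed.

Definition side z : bool := `[< exists y k, admissible z y k /\ 0 < sdot y (normal k y) z >].

Lemma sideE z y k : admissible z y k -> side z = (0 < sdot y (normal k y) z).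
Proof.
move=> ha; apply/asboolP/idP => [[y' [k' [ha' hs]]] | hs]; last by exists y, k.
by rewrite (admissible_sign_eq ha ha').
Qed.

Lemma setdist_gt0_off_K z : edist z x0 < r -> ~ K z -> 0 < setdist z K.
Proof.
move=> hz nKz; apply: setdist_gt0 => //.
have [_ [C [cC KC]]] := K_closed.
have nCz : ~ C z by move=> Cz; apply: nKz; rewrite KC; split => //; rewrite /eball /=; rlra.
apply: filterS (closed_openC cC z nCz) => w nCw Kw; apply: nCw.
by move: Kw; rewrite KC => -[].
Qed.

Lemma exists_admissible z : edist z x0 < r -> 0 < setdist z K ->
  exists y k, [/\ admissible z y k, 22/5 * setdist z K <= scale k &
                  scale k <= 44/5 * setdist z K].
Proof.
move=> hz d0; have dr := le_lt_trans (setdist_le z Kx0) hz.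
have [y Ky hy] := setdist_approx K_neq0 z (divr_gt0 d0 (ltr0n _ 10)).
have c0 : 0 < 22/5 * setdist z K by lra.
have cs : 22/5 * setdist z K <= scale 0 by rewrite scale0; rlra.
have [k [hk1 hk2]] := scale_between c0 cs.
rewrite scaleS in hk2; exists y, k; split => //; last lra.
split; [split => // | lra | lra | lra].
by have := edist_triangle y z x0; rewrite (edistC y z); rlra.
Qed.

Lemma admissible_perturb z y k w : admissible z y k ->
  22/5 * setdist z K <= scale k -> scale k <= 44/5 * setdist z K ->
  edist z w < setdist z K / 20 -> edist z w < (11/10 * setdist z K - edist z y) / 4 ->
  admissible w y k.
Proof.
move=> [hy hzy _ _] hk1 hk2 hw1 hw2.
have := setdist_lipschitz K_neq0 w z; have := setdist_lipschitz K_neq0 z w.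
rewrite (edistC w z) => L1 L2.
split => //; try lra.
by have := edist_triangle w z y; rewrite (edistC w z); lra.
Qed.

Lemma side_locally_constant z : (eball x0 r `\` K) z ->
  nbhs z [set w | side w = side z].
Proof.
move=> [hz nKz]; have d0 := setdist_gt0_off_K hz nKz.
have [y [k [ha hk1 hk2]]] := exists_admissible hz d0.
have l1 := norm_sdot_normal_ge ha.
have hn : unitv (normal k y) by case: ha => hy _ _ _; exact: unitv_normal.
set e := Num.min (setdist z K / 20) ((11/10 * setdist z K - edist z y) / 4).
have e0 : 0 < e by rewrite lt_min !divr_gt0 // subr_gt0; case: ha.
apply: filterS (nbhs_edist z e0) => w /=; rewrite lt_min => /andP[hw1 hw2].
rewrite (sideE (admissible_perturb ha hk1 hk2 hw1 hw2)) (sideE ha).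
have -> : sdot y (normal k y) w = sdot y (normal k y) z + sdot z (normal k y) w.
  by rewrite /sdot; ring.
rewrite ltr0_addr_small //; apply: le_lt_trans (norm_sdot_le _ _ hn) _.
by rewrite edistC; lra.
Qed.

Definition pole b : R * R :=
  (x0.1 + (-1) ^+ b * (r / 2) * nu.1, x0.2 + (-1) ^+ b * (r / 2) * nu.2).

Lemma sdot_pole b : sdot x0 nu (pole b) = (-1) ^+ b * (r / 2).
Proof.
have := unitv_nu; rewrite /unitv => hn.
have -> : sdot x0 nu (pole b) = (-1) ^+ b * (r / 2) * (nu.1 ^+ 2 + nu.2 ^+ 2).
  by rewrite /sdot /pole /=; ring.
by rewrite hn mulr1.
Qed.

Lemma edist_pole b : edist (pole b) x0 = r / 2.
Proof.
have := unitv_nu; rewrite /unitv => hn.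
have r2 : 0 <= r / 2 by rewrite divr_ge0 // ltW.
rewrite -(ger0_norm r2); apply: edist_norm_of_sqr.
transitivity (((-1) ^+ b) ^+ 2 * (r / 2) ^+ 2 * (nu.1 ^+ 2 + nu.2 ^+ 2)).
  by rewrite sqrr_sign hn mul1r mulr1.
by rewrite /pole /=; ring.
Qed.

Definition half_disc b : set (R * R) :=
  [set z | edist z x0 < r /\ beta K x0 r * r < (-1) ^+ b * sdot x0 nu z].

Lemma half_disc_pole b : half_disc b (pole b).
Proof.
split; first by rewrite edist_pole; rlra.
rewrite sdot_pole mulrA -expr2 sqrr_sign mul1r.
by have := beta0_mul_lt; rlra.
Qed.

Lemma half_disc_notin_K b z : half_disc b z -> ~ K z.
Proof.
move=> [hz hs] Kz; have := nu_strip Kz hz.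
by have := ler_norm ((-1) ^+ b * sdot x0 nu z); rewrite normrMsign; lra.
Qed.

Lemma half_disc_segment b a c : half_disc b a -> half_disc b c ->
  [set segment_pt a c t | t in `[0, 1]] `<=` half_disc b.
Proof.
move=> [ha1 ha2] [hc1 hc2] _ [t + <-]; rewrite /= in_itv /= => ht; split.
  by apply: le_lt_trans (edist_segment_pt_le _ _ _ ht) _; exact: convex_comb_lt.
rewrite sdot_segment_pt.
have := @convex_comb_lt _ (- ((-1) ^+ b * sdot x0 nu a)) (- ((-1) ^+ b * sdot x0 nu c))
  (- (beta K x0 r * r)) t; rewrite !ltrN2 => /(_ ha2 hc2 ht).
lra.
Qed.

Lemma setdist_pole_ge b : 49/100 * r <= setdist (pole b) K.
Proof.
apply: lb_le_inf; first by exists (edist (pole b) x0), x0.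
move=> _ [q Kq <-]; case: (ltrP (edist q x0) r) => hq; last first.
  by have := edist_triangle q (pole b) x0; rewrite edist_pole (edistC q (pole b)); rlra.
apply: le_trans (norm_sdot_le q (pole b) unitv_nu).
have -> : sdot q nu (pole b) = sdot x0 nu (pole b) - sdot x0 nu q by rewrite /sdot; ring.
have := nu_strip Kq hq; have := beta0_mul_lt; have := lerB_dist (sdot x0 nu (pole b)) (sdot x0 nu q).
have r2 : 0 <= r / 2 by rewrite divr_ge0 // ltW.
by rewrite sdot_pole normrMsign (ger0_norm r2); rlra.
Qed.

Lemma dot_nu_normal1_ge y : near_x0 y -> edist y x0 < 3/2 * r ->
  99/100 <= dot nu (normal 1 y).
Proof.
move=> hy hyx; have s1 : scale 1 = 5/2 * r by rewrite scaleS scale0; lra.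
have c0 := sqr_cross_normal0_nu hy.
have c01 : cross (normal 1 y) (normal 0 y) ^+ 2 <= 1/100.
  by apply: sqr_cross_normals; rewrite ?edistxx // mulr_gt0 ?scale_gt0.
have c1 : cross (normal 1 y) nu ^+ 2 <= 1/100.
  by apply: sqr_cross_nu (flat_line_normal 1 hy) _ _; rewrite s1; rlra.
apply: dot_ge_of_cross unitv_nu (unitv_normal 1 hy) _ _; last by rewrite sqr_crossC.
apply: dot_gt0_trans unitv_nu (unitv_normal 0 hy) (unitv_normal 1 hy) _ _
  (dot_nu_normal0_gt0 hy) (dot_normalS_gt0 0 hy); rewrite sqr_crossC; lra.
Qed.

Lemma side_pole b : side (pole b) = ~~ b.
Proof.
have d1 := setdist_pole_ge b; have d2 := setdist_le (pole b) Kx0.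
rewrite edist_pole in d2; set d := setdist (pole b) K in d1 d2.
have [y Ky hy] : exists2 y, K y & edist (pole b) y < d + d / 10.
  by apply: setdist_approx => //; rlra.
have hyx : edist y x0 < 21/20 * r.
  by have := edist_triangle y (pole b) x0; rewrite edist_pole (edistC y (pole b)); rlra.
have near_y : near_x0 y by split => //; rlra.
have s1 : scale 1 = 5/2 * r by rewrite scaleS scale0; lra.
have ha : admissible (pole b) y 1 by split; rewrite ?s1 -/d //; rlra.
have hn1 : 99/100 <= dot nu (normal 1 y) by apply: dot_nu_normal1_ge => //; rlra.
have [_ hf _] := flat_line_normal 1 near_y.
have hx0 : `|sdot y (normal 1 y) x0| < r / 40.
  have hx0y : edist x0 y < scale 1 by rewrite edistC s1; rlra.
  by apply: lt_le_trans (hf _ Kx0 hx0y) _; rewrite s1; lra.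
rewrite (sideE ha).
have -> : sdot y (normal 1 y) (pole b) =
    (-1) ^+ b * (r / 2 * dot nu (normal 1 y)) + sdot y (normal 1 y) x0.
  by rewrite /sdot /pole /dot /=; ring.
have hpos : 0 < r / 2 * dot nu (normal 1 y) by apply: mulr_gt0; rlra.
have hlt : `|sdot y (normal 1 y) x0| < `|(-1) ^+ b * (r / 2 * dot nu (normal 1 y))|.
  have r2 : 0 <= r / 2 by rewrite divr_ge0 // ltW.
  by rewrite normrMsign (gtr0_norm hpos); have := ler_wpM2l r2 hn1; rlra.
by rewrite (ltr0_addr_small hlt) pmulr_lgt0 // signr_gt0.
Qed.


Lemma side_half_disc b z : half_disc b z -> side z = ~~ b.
Proof.
move=> hz; rewrite -(side_pole b).
apply: (locally_constant_connected side_locally_constant (@connected_segment _ (pole b) z)).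
- move=> w /(half_disc_segment (half_disc_pole b) hz) hw.
  by split; [case: hw | exact: half_disc_notin_K hw].
- by exists 1; [rewrite /= in_itv /= lexx ler01 | exact: segment_pt1].
- by exists 0; [rewrite /= in_itv /= lexx ler01 | exact: segment_pt0].
Qed.

Lemma half_disc_sub_component b :
  half_disc b `<=` connected_component (eball x0 r `\` K) (pole b).
Proof.
move=> z hz; apply: (connected_component_max _ _ (@connected_segment _ (pole b) z)).
- by exists 0; [rewrite /= in_itv /= lexx ler01 | exact: segment_pt0].
- move=> w /(half_disc_segment (half_disc_pole b) hz) hw.
  by split; [case: hw | exact: half_disc_notin_K hw].
- by exists 1; [rewrite /= in_itv /= lexx ler01 | exact: segment_pt1].
Qed.

Lemma distinct_components_half_discs :
  distinct_components (eball x0 r `\` K) (half_disc false) (half_disc true).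
Proof.
split; [exists (pole false) | exists (pole true) | ]; try exact: half_disc_sub_component.
move=> a c ha hc hac.
have Ua : (eball x0 r `\` K) a by split; [case: ha | exact: half_disc_notin_K ha].
have := locally_constant_connected side_locally_constant (@component_connected _ _ a)
  (@connected_component_sub _ _ _) (connected_component_refl Ua) hac.
by rewrite (side_half_disc ha) (side_half_disc hc).
Qed.

Lemma Dplus_half_disc : Dplus x0 r nu (beta K x0 r * r) = half_disc false.
Proof.
by apply/seteqP; split => z [h1 h2]; split => //; move: h2; rewrite expr0 mul1r.
Qed.

Lemma Dminus_half_disc : Dminus x0 r nu (beta K x0 r * r) = half_disc true.
Proof.
by apply/seteqP; split => z [h1 h2]; split => //; move: h2; rewrite expr1 mulN1r.
Qed.

End CoherentNormals.

Lemma separates_ball : separates K x0 r.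
Proof.
split; [|split].
- by apply: le_trans beta0_le _; rlra.
- exact: exists_optimal_normal.
- move=> nu hnu; rewrite (Dplus_half_disc nu) (Dminus_half_disc nu).
  exact: distinct_components_half_discs hnu.
Qed.

End Separation.

Theorem lemma4p14 (R : realType) (x0 : R * R) (r0 eps0 : R)
  (K : set (R * R)) :
  0 < r0 -> 0 < eps0 -> eps0 < 1/100 ->
  rel_closed K (eball x0 r0) -> K x0 ->
  (forall x r, K x -> eball x0 (r0 / 2) x -> 0 < r -> r <= r0 / 2 ->
     beta_bil K x r <= eps0) ->
  separates K x0 (r0 / 10).
Proof.
move=> r0_gt0 _ eps0_lt K_closed Kx0 beta_bil_small.
have r_gt0 : 0 < r0 / 10 by rewrite divr_gt0.
have half : r0 / 2 = 5 * (r0 / 10) by field.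
apply: separates_ball eps0_lt Kx0 _ _ => //.
- by move=> x rho Kx hx rho0 rho5; apply: beta_bil_small; rewrite ?half.
- by have -> : 10 * (r0 / 10) = r0 by field.
Qed.
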